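(* We have $\psi_{FV}=\psi_{YZL}\circ\Psi$ as maps from $\mathfrak{S}_{n+1}$ to $\mathcal{LH}_n$.
   Context: A 2-Motzkin path of length $n$ is a word $\mathbf{s}=s_1\ldots s_n$ on the alphabet $\{\textsc{U},\textsc{D},\textsc{L}_r,\textsc{L}_b\}$ with as many letters $\textsc{U}$ as $\textsc{D}$ and heights $h_i(\mathbf{s})=|s_1\ldots s_i|_{\textsc{U}}-|s_1\ldots s_i|_{\textsc{D}}\ge 0$ for $i=1,\ldots,n$, $h_0(\mathbf{s})=0$. A Laguerre history of length $n$ is a pair $(\mathbf{s},\mathbf{p})$ with $\mathbf{s}$ a 2-Motzkin path of length $n$ and $\mathbf{p}=(p_1,\ldots,p_n)$ with $0\le p_i\le h_{i-1}(\mathbf{s})$; $\mathcal{LH}_n$ denotes the set of Laguerre histories of length $n$. Fran\c con–Viennot bijection $\psi_{FV}:\mathfrak{S}_{n+1}\to\mathcal{LH}_n$: for $\sigma\in\mathfrak{S}_{n+1}$ with convention $\sigma(0)=\sigma(n+2)=0$, a value $\sigma(j)$ is a peak if $\sigma(j-1)<\sigma(j)>\sigma(j+1)$, a valley if $\sigma(j-1)>\sigma(j)<\sigma(j+1)$, a double ascent if $\sigma(j-1)<\sigma(j)<\sigma(j+1)$, a double descent if $\sigma(j-1)>\sigma(j)>\sigma(j+1)$. Then $\psi_{FV}(\sigma)=(\mathbf{s},\mathbf{p})$ with, for $i=1,\ldots,n$, $s_i=\textsc{U}$ if $i$ is a valley, $\textsc{D}$ if $i$ is a peak, $\textsc{L}_b$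 if $i$ is a double ascent, $\textsc{L}_r$ if $i$ is a double descent of $\sigma$, and $p_i=(2\text{-}13)_i\sigma$, where $(2\text{-}13)_i\sigma=\#\{j: i<j<n+1,\ \sigma(j)<\sigma(i)<\sigma(j+1)\}$ (the number of occurrences of the vincular pattern $2\text{-}13$ in which the letter $i$ plays the role of the ''2''). Yan–Zhou–Lin bijection $\psi_{YZL}:\mathfrak{S}_{n+1}\to\mathcal{LH}_n$: for $\sigma\in\mathfrak{S}_{n+1}$, $\psi_{YZL}(\sigma)=(\mathbf{s},\mathbf{p})$ where for $i=1,\ldots,n$: $s_i=\textsc{U}$ if $i<\sigma(i)$ and $i+1\le\sigma^{-1}(i+1)$; $s_i=\textsc{D}$ if $i\ge\sigma(i)$ and $i+1>\sigma^{-1}(i+1)$; $s_i=\textsc{L}_b$ if $i<\sigma(i)$ and $i+1>\sigma^{-1}(i+1)$; $s_i=\textsc{L}_r$ if $i\ge\sigma(i)$ and $i+1\le\sigma^{-1}(i+1)$; and $p_i=\mathsf{nest}_i\sigma=\#\{j: j<i<\sigma(i)<\sigma(j)\ \text{or}\ \sigma(j)<\sigma(i)\le i<j\}$. The bijection $\Phi$ on $\mathfrak{S}_m$ (Clarke–Steingr\'imsson–Zeng): for $\sigma\in\mathfrak{S}_m$, a letter $\sigma(i)$ is a descent top (resp. descent bottom) if $\sigma(i)>\sigma(i+1)$ (resp. $\sigma(i-1)>\sigma(i)$). For a letter $x=\sigma(i)$ let $(2\text{-}31)_x\sigma=\#\{j: i<j<m,\ \sigma(j+1)<x<\sigma(j)\}$.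 Form two biwords $\binom{f}{f'}$ and $\binom{g}{g'}$, where $f$ (resp. $g$) is the increasing word of descent bottoms (resp. non-descent bottoms) of $\sigma$, and $f'$ (resp. $g'$) is the arrangement of the descent tops (resp. non-descent tops) of $\sigma$ such that the number of inversions in $f'$ having $x$ as bottom (resp. the number of inversions in $g'$ having $x$ as top) equals $(2\text{-}31)_x\sigma$ for each letter $x$. Concatenate to obtain the biword $\binom{f\,g}{f'\,g'}$, rearrange its columns so that the bottom row is increasing; the top row is $\Phi(\sigma)$. The bijection $\Psi$ on $\mathfrak{S}_{n+1}$: given $\sigma\in\mathfrak{S}_{n+1}$, let $\hat\sigma\in\mathfrak{S}_{n+2}$ be $\hat\sigma=(\sigma(1)+1)(\sigma(2)+1)\cdots(\sigma(n+1)+1)\,1$ and $\tau=\Phi(\hat\sigma)$ (which satisfies $\tau(1)=n+2$); then $\Psi(\sigma)=\tau(2)\cdots\tau(n+2)\in\mathfrak{S}_{n+1}$. *)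

(* Permutations of [m] = {1,...,m} are represented as
   words (seq nat) that are rearrangements of [:: 1; 2; ...; m]. *)
From mathcomp Require Import all_boot.
Set Implicit Arguments. Unset Strict Implicit. Unset Printing Implicit Defensive.

(* the letters U, D, L_r, L_b of 2-Motzkin paths *)
Inductive step := U | D | Lr | Lb.

Definition is_perm (m : nat) (s : seq nat) := perm_eq s (iota 1 m).

(* s(j) for 1 <= j <= size s, and 0 otherwise (so s(0) = s(m+1) = 0) *)
Definition at_ (s : seq nat) (j : nat) : nat :=
  if j is j'.+1 then nth 0 s j' else 0.

(* s^{-1}(x): the position (1-based) of the letter x in s *)
Definition pos (s : seq nat) (x : nat) : nat := (index x s).+1.

(* Laguerre histories are pairs (path, weights) *)
Definition LH := (seq step * seq nat)%type.

Definition fv_step (s : seq nat) (i : nat) : step :=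
  let j := pos s i in
  let a := at_ s j.-1 in let b := at_ s j.+1 in
  if (i < a) && (i < b) then U
  else if (a < i) && (b < i) then D
  else if (a < i) && (i < b) then Lb
  else Lr.

Definition pat2_13 (s : seq nat) (i : nat) : nat :=
  let n := (size s).-1 in
  count (fun j => (at_ s j < i) && (i < at_ s j.+1))
        (iota (pos s i).+1 (n - pos s i)).

Definition psi_FV (s : seq nat) : LH :=
  let n := (size s).-1 in
  ([seq fv_step s i | i <- iota 1 n], [seq pat2_13 s i | i <- iota 1 n]).

Definition yzl_step (s : seq nat) (i : nat) : step :=
  if i < at_ s i then (if i.+1 <= pos s i.+1 then U else Lb)
  else (if i.+1 <= pos s i.+1 then Lr else D).

Definition nest (s : seq nat) (i : nat) : nat :=
  count (fun j => ((j < i) && (i < at_ s i) && (at_ s i < at_ s j))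
               || ((at_ s j < at_ s i) && (at_ s i <= i) && (i < j)))
        (iota 1 (size s)).

Definition psi_YZL (s : seq nat) : LH :=
  let n := (size s).-1 in
  ([seq yzl_step s i | i <- iota 1 n], [seq nest s i | i <- iota 1 n]).

Definition descent_top (s : seq nat) (x : nat) : bool :=
  has (fun i => (at_ s i == x) && (at_ s i.+1 < at_ s i)) (iota 1 (size s).-1).

Definition descent_bottom (s : seq nat) (x : nat) : bool :=
  has (fun i => (at_ s i == x) && (at_ s i < at_ s i.-1)) (iota 2 (size s).-1).

Definition pat2_31 (s : seq nat) (x : nat) : nat :=
  count (fun j => (at_ s j.+1 < x) && (x < at_ s j))
        (iota (pos s x).+1 (size s - (pos s x).+1)).

(* Phi_spec s t : t = Phi(s), for some admissible arrangements f', g' of the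
   descent tops / non-descent tops.  The number of inversions of f' having x
   as bottom is #{y before x in f' | y > x}; the number of inversions of g'
   having x as top is #{y after x in g' | y < x}. *)
Definition Phi_spec (s t : seq nat) : Prop :=
  let f := sort leq (filter (descent_bottom s) s) in
  let g := sort leq (filter (fun x => ~~ descent_bottom s x) s) in
  exists (f' g' : seq nat),
    [/\ perm_eq f' (filter (descent_top s) s),
        perm_eq g' (filter (fun x => ~~ descent_top s x) s),
        (forall k, k < size f' ->
           count (fun y => nth 0 f' k < y) (take k f') = pat2_31 s (nth 0 f' k)),
        (forall k, k < size g' ->
           count (fun y => y < nth 0 g' k) (drop k.+1 g') = pat2_31 s (nth 0 g' k))
      & (* columns of (f g / f' g') sorted by bottom row; t is the top row *)
        t = [seq nth 0 (f ++ g) (index y (f' ++ g')) | y <- iota 1 (size s)]].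

Definition hat (s : seq nat) : seq nat := rcons [seq x.+1 | x <- s] 1.

(* Psi(s) = t(2) ... t(n+2) where t = Phi(hat s) *)
Definition Psi_of (t : seq nat) : seq nat := behead t.

From mathcomp Require Import all_boot zify.
Set Implicit Arguments. Unset Strict Implicit. Unset Printing Implicit Defensive.

(* Let w = hat s, a permutation of 1..n+2 ending with 1, and read Phi(w) as the map
   phi sending the bottom of each column of the biword to its top.  For a value x,
   sorting the descents of w with bottom below x by the position of their top shows
   that the descent bottoms below x outnumber the descent tops below x by
   [x is a descent top] plus the number of descents across x, and the latter bounds
   (2-31)_x.  Hence the arrangements f' and g' exist, phi sends a descent top x to a
   smaller descent bottom and any other x to a non-smaller non-descent bottom, and the
   inversion conditions on f', g' say that (2-31)_x counts the letters nesting with x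
   in phi.  As w ends with 1, phi 1 = n+2 and Psi(s) is phi shifted by one place, so
   the excedance and position data of Psi(s) at i are the descent data of w at i+1,
   which is the Francon-Viennot step of s at i.  Finally, after position pos w x the
   word w crosses the value x alternately downwards and upwards, which turns (2-31)_x
   into (2-13)_x plus [x is not a descent top]; that extra term is the nesting of x
   with the letter 1, and (2-13)_(i+1) of w is (2-13)_i of s. *)

Lemma count_add3 (T : Type) (P Q R S : pred T) (l : seq T) :
  (forall i, P i = Q i + R i + S i :> nat) ->
  count P l = count Q l + count R l + count S l.
Proof. by move=> h; elim: l => //= a l ->; rewrite h; lia. Qed.

Lemma count_split (T : Type) (a P : pred T) (l : seq T) :
  count P l = count (fun y => a y && P y) l + count (fun y => ~~ a y && P y) l.
Proof. by elim: l => //= y l ->; case: (a y); case: (P y) => /=; lia. Qed.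

Lemma count_iota1 (P : pred nat) m : count P (iota m 1) = P m.
Proof. by rewrite /= addn0. Qed.

Lemma count_iota_succ (P : pred nat) m n :
  count P (iota m.+1 n) = count (fun j => P j.+1) (iota m n).
Proof. by elim: n m => //= n IH m; rewrite IH. Qed.

Lemma has_single (T : eqType) (f P : pred T) (l : seq T) k :
  (forall j, j \in l -> f j = (j == k)) ->
  has (fun j => f j && P j) l = (k \in l) && P k.
Proof.
move=> fk; apply/hasP/andP => [[j jl /andP [fj Pj]]|[kl Pk]].
  by move: fj; rewrite fk // => /eqP jk; rewrite -jk.
by exists k; rewrite // fk ?eqxx.
Qed.

Lemma count_and_pred1 (T : eqType) (a : pred T) (s : seq T) x : uniq s -> x \in s ->
  count (fun y => a y && (y == x)) s = a x.
Proof.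
move=> us xs; rewrite (eq_count (a2 := predI a (pred1 x))) // -count_filter.
by rewrite filter_pred1_uniq //= addn0.
Qed.

Lemma count_lt_gt (a : pred nat) (s : seq nat) (x : nat) : uniq s -> x \in s ->
  count a s = count (fun y => a y && (y < x)) s + count (fun y => a y && (x < y)) s + a x.
Proof.
move=> us xs; rewrite -(count_and_pred1 a us xs); apply: count_add3 => y.
by case: (a y); case: ltngtP.
Qed.

Section IndexCount.
Variables (T : eqType) (P : pred T) (s : seq T).
Hypothesis s_uniq : uniq s.

Lemma take_drop_disjoint k y : y \in drop k s -> y \notin take k s.
Proof.
have : uniq (take k s ++ drop k s) by rewrite cat_take_drop.
by rewrite cat_uniq => /and3P [_ /hasPn disj _]; apply: disj.
Qed.

Lemma count_index_ltn k :
  count (fun y => P y && (index y s < k)) s = count P (take k s).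
Proof.
rewrite -[X in count _ X](cat_take_drop k) count_cat.
rewrite [X in _ + X](eq_in_count (a2 := pred0)) ?count_pred0 ?addn0.
  by apply: eq_in_count => y yt; rewrite -in_take ?yt ?andbT // (mem_take yt).
move=> y yd; rewrite -in_take ?(negbTE (take_drop_disjoint yd)) ?andbF //.
exact: mem_drop yd.
Qed.

Lemma count_index_gtn k :
  count (fun y => P y && (k < index y s)) s = count P (drop k.+1 s).
Proof.
rewrite -[X in count _ X](cat_take_drop k.+1) count_cat.
rewrite [X in X + _](eq_in_count (a2 := pred0)) ?count_pred0 ?add0n.
  apply: eq_in_count => y yd; rewrite ltnNge -ltnS -in_take ?(mem_drop yd) //.
  by rewrite (take_drop_disjoint yd) andbT.
by move=> y yt; rewrite ltnNge -ltnS -in_take ?yt ?andbF // (mem_take yt).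
Qed.

End IndexCount.

Lemma sorted_nth_ltn (f : seq nat) :
  sorted ltn f -> {in [pred i | i < size f] &, {mono nth 0 f : i j / i < j}}.
Proof. by move=> f_sorted; apply/leqW_mono_in/leq_mono_in/(sorted_ltn_nth ltn_trans). Qed.

Lemma sorted_nth_lt_count (f : seq nat) k y : sorted leq f -> k < size f ->
  (nth 0 f k < y) = (k < count (fun z => z < y) f).
Proof.
move=> f_sorted hk; have mono := sorted_leq_nth leq_trans leqnn 0 f_sorted.
rewrite -[X in count _ X](cat_take_drop k.+1) count_cat.
case: ltnP => hy.
  have -> : count (fun z => z < y) (take k.+1 f) = k.+1.
    apply/eqP; rewrite -{2}(size_takel hk) -all_count.
    apply/(all_nthP 0) => j; rewrite size_takel // => hj.
    by rewrite nth_take //; apply: leq_ltn_trans hy; apply: mono; rewrite ?inE; lia.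
  by rewrite ltnS leq_addr.
rewrite (take_nth 0 hk) -cats1 count_cat /= [nth 0 f k < y]ltnNge hy /= !addn0.
apply/esym/negbTE; rewrite -leqNgt.
have -> : count (fun z => z < y) (drop k.+1 f) = 0.
  apply/eqP; rewrite -leqn0 leqNgt -has_count -all_predC.
  apply/(all_nthP 0) => j; rewrite size_drop => hj /=; rewrite nth_drop -leqNgt.
  by apply: leq_trans hy _; apply: mono; rewrite ?inE; lia.
by rewrite addn0 -[leqRHS](size_takel (ltnW hk)) count_size.
Qed.

Section Arrangement.
Variables (T : eqType) (x0 : T) (r : rel T).

Definition left_code (L : seq T) (c : T -> nat) :=
  forall k, k < size L -> count (r (nth x0 L k)) (take k L) = c (nth x0 L k).

Lemma left_code_insert (L : seq T) z (c : T -> nat) :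
  r z z = false -> (forall y, y \in L -> r z y && ~~ r y z) -> c z <= size L ->
  left_code L c -> left_code (take (c z) L ++ z :: drop (c z) L) c.
Proof.
move=> rzz zL hj codeL; set j := c z.
have szt : size (take j L) = j by rewrite size_takel.
move=> k; rewrite size_cat szt /= size_drop addnS subnKC // ltnS => hk.
case: (ltngtP k j) => hkj.
- rewrite nth_cat take_cat szt hkj (nth_take _ hkj) take_takel ?codeL //; last exact: ltnW.
  exact: leq_trans hkj hj.
- have hk' : j + (k - j.+1) < size L by lia.
  have -> : k = j + (k - j.+1).+1 by lia.
  rewrite nth_cat take_cat szt ltnNge leq_addr /= addKn /= nth_drop count_cat /=.
  have /zL /andP [_ /negbTE ->] : nth x0 L (j + (k - j.+1)) \in L by apply: mem_nth.
  by rewrite add0n -count_cat -takeD codeL.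
- have : all (r z) (take j L) by apply/allP => y /mem_take /zL /andP [].
  by rewrite hkj nth_cat take_cat szt ltnn subnn /= cats0 all_count szt => /eqP.
Qed.

Hypothesis r_irr : irreflexive r.
Hypothesis r_least : forall S0 : seq T, S0 != [::] ->
  exists2 z, z \in S0 & forall y, y \in S0 -> y != z -> r z y && ~~ r y z.

Lemma exists_left_code (S : seq T) (c : T -> nat) :
  uniq S -> (forall x, x \in S -> c x <= count (r x) S) ->
  exists2 L, perm_eq L S & left_code L c.
Proof.
have [n] := ubnP (size S); elim: n S => // n IH S; rewrite ltnS => hS uS hc.
have [->|S_neq0] := eqVneq S [::]; first by exists [::].
have [z zS zleast] := r_least S_neq0.
have pS : perm_eq S (z :: rem z S) by apply: perm_to_rem.
have zS' : z \notin rem z S by move: uS; rewrite (perm_uniq pS) /= => /andP [].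
have memS' y : y \in rem z S -> y \in S /\ y != z.
  move=> yS; split; first by rewrite (perm_mem pS) inE yS orbT.
  by apply: contraNneq zS' => yz; rewrite -[X in X \in _]yz.
have [L' pL' codeL'] : exists2 L', perm_eq L' (rem z S) & left_code L' c.
  apply: IH; first by move: hS; rewrite (perm_size pS) /=; lia.
    exact: rem_uniq.
  move=> x /memS' [xS xz]; have := hc x xS; rewrite (permP pS) /=.
  by have /andP [_ /negbTE ->] := zleast x xS xz.
have zL' y : y \in L' -> r z y && ~~ r y z.
  by rewrite (perm_mem pL') => /memS' [yS yz]; apply: zleast.
have szL' : count (r z) S = size L'.
  rewrite (permP pS) /= r_irr -(permP pL'); apply/eqP; rewrite -all_count.
  by apply/allP => y /zL' /andP [].
exists (take (c z) L' ++ z :: drop (c z) L'); last first.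
  by apply: left_code_insert => //; rewrite -szL' hc.
rewrite -[z :: _]cat1s perm_catCA cat_take_drop /= perm_sym.
by apply: perm_trans pS _; rewrite perm_cons perm_sym.
Qed.

End Arrangement.

Lemma exists_larger_before_code (S : seq nat) (c : nat -> nat) :
  uniq S -> (forall x, x \in S -> c x <= count (fun y => x < y) S) ->
  exists2 L, perm_eq L S & forall k, k < size L ->
    count (fun y => nth 0 L k < y) (take k L) = c (nth 0 L k).
Proof.
apply: (@exists_left_code _ 0 ltn) => [x|S0 S0_neq0]; first exact: ltnn.
have exS0 : exists x, x \in S0 by case: S0 S0_neq0 => // x S0 _; exists x; rewrite mem_head.
case: (ex_minnP exS0) => z zS0 zmin; exists z => // y yS0 yz.
by rewrite /= ltn_neqAle eq_sym yz zmin //= -leqNgt zmin.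
Qed.

Lemma exists_smaller_after_code (S : seq nat) (c : nat -> nat) :
  uniq S -> (forall x, x \in S -> c x <= count (fun y => y < x) S) ->
  exists2 L, perm_eq L S & forall k, k < size L ->
    count (fun y => y < nth 0 L k) (drop k.+1 L) = c (nth 0 L k).
Proof.
move=> uS hc; have [L pL codeL] : exists2 L, perm_eq L S & left_code 0 gtn L c.
  apply: exists_left_code => // [x|S0 S0_neq0]; first exact: ltnn.
  have exS0 : exists x, x \in S0 by case: S0 S0_neq0 => // x S0 _; exists x; rewrite mem_head.
  have S0_bound y : y \in S0 -> y <= \max_(x <- S0) x by move=> yS0; apply: leq_bigmax_seq.
  case: (ex_maxnP exS0 S0_bound) => z zS0 zmax; exists z => // y yS0 yz.
  by rewrite /= ltn_neqAle yz zmax //= -leqNgt zmax.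
exists (rev L); first by rewrite perm_rev.
move=> k; rewrite size_rev => hk.
by rewrite nth_rev // drop_rev count_rev; apply: codeL; rewrite ltn_subrL (leq_ltn_trans _ hk).
Qed.

Lemma is_perm_uniq m (w : seq nat) : is_perm m w -> uniq w.
Proof. by move=> pw; rewrite (perm_uniq pw) iota_uniq. Qed.

Lemma mem_is_perm m (w : seq nat) (x : nat) : is_perm m w -> (x \in w) = (0 < x <= m).
Proof. by move=> pw; rewrite (perm_mem pw) mem_iota add1n ltnS. Qed.

Section Word.
Variable w : seq nat.

Lemma at_pos (x : nat) : x \in w -> at_ w (pos w x) = x.
Proof. exact: nth_index. Qed.

Lemma pos_leq_size (x : nat) : x \in w -> pos w x <= size w.
Proof. by rewrite /pos index_mem. Qed.

Lemma at_mem (j : nat) : 0 < j <= size w -> at_ w j \in w.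
Proof. by case: j => //= j; apply: mem_nth. Qed.

Lemma at_out (j : nat) : ~~ (0 < j <= size w) -> at_ w j = 0.
Proof. by case: j => //= j; rewrite -leqNgt; apply: nth_default. Qed.

Lemma at_leq_size m j : is_perm m w -> at_ w j <= m.
Proof.
move=> pw; have [jw|jw] := boolP (0 < j <= size w); last by rewrite at_out.
by have := at_mem jw; rewrite (mem_is_perm _ pw) => /andP [].
Qed.

Lemma map_at_iota : map (at_ w) (iota 1 (size w)) = w.
Proof.
rewrite -[1]addn0 iotaDl -map_comp -[RHS](mkseq_nth 0) /mkseq.
by apply: eq_map.
Qed.

Lemma count_at (P : pred nat) :
  count P w = count (fun i => P (at_ w i)) (iota 1 (size w)).
Proof. by rewrite -{1}map_at_iota count_map. Qed.

Definition descents_across x :=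
  count (fun j => (at_ w j.+1 < x) && (x < at_ w j)) (iota 1 (size w).-1).

Lemma pat2_31_leq_descents_across (x : nat) : x \in w -> pat2_31 w x <= descents_across x.
Proof.
move=> xw; rewrite /pat2_31 /descents_across; have := pos_leq_size xw.
case: (ltnP (pos w x) (size w)) => hx _; last by rewrite (_ : _ - _ = 0) //; lia.
rewrite (_ : (size w).-1 = pos w x + (size w - (pos w x).+1)); last by lia.
by rewrite iotaD count_cat add1n leq_addl.
Qed.

(* A walk avoiding the value x crosses it alternately downwards and upwards. *)
Lemma crossings_telescope (x a k : nat) : (forall j, a <= j <= a + k -> at_ w j != x) ->
  count (fun j => (at_ w j.+1 < x) && (x < at_ w j)) (iota a k) + (x < at_ w (a + k)) =
  count (fun j => (at_ w j < x) && (x < at_ w j.+1)) (iota a k) + (x < at_ w a).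
Proof.
elim: k => [|k IH] hx; first by rewrite addn0.
have := IH (fun j hj => hx j ltac:(lia)).
have := hx (a + k) ltac:(lia); have := hx (a + k).+1 ltac:(lia).
rewrite -(addn1 k) !iotaD !count_cat !count_iota1 addnA addn1.
by case: (ltngtP (at_ w (a + k)) x); case: (ltngtP (at_ w (a + k).+1) x) => //=; lia.
Qed.

Hypothesis w_uniq : uniq w.

Lemma pos_at (j : nat) : 0 < j <= size w -> pos w (at_ w j) = j.
Proof. by case: j => // j /= hj; rewrite /pos index_uniq. Qed.

Lemma at_eq_pos (x j : nat) : x \in w -> 0 < j <= size w -> (at_ w j == x) = (j == pos w x).
Proof.
move=> xw jw; apply/eqP/eqP => [<-|->]; last exact: at_pos.
by rewrite pos_at.
Qed.

Lemma at_neq (x j : nat) : 0 < x -> x \in w -> j != pos w x -> at_ w j != x.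
Proof.
move=> x_gt0 xw jx; have [jw|jw] := boolP (0 < j <= size w); first by rewrite at_eq_pos.
by rewrite at_out // neq_ltn x_gt0.
Qed.

Lemma descent_top_pos (x : nat) : x \in w ->
  descent_top w x = (pos w x < size w) && (at_ w (pos w x).+1 < x).
Proof.
move=> xw; rewrite /descent_top (@has_single _ _ _ _ (pos w x)) => [|j].
  rewrite at_pos // mem_iota; have := pos_leq_size xw; rewrite /pos; lia.
by rewrite mem_iota => hj; apply: at_eq_pos => //; lia.
Qed.

Lemma descent_bottom_pos (x : nat) : x \in w ->
  descent_bottom w x = (x < at_ w (pos w x).-1).
Proof.
move=> xw; rewrite /descent_bottom (@has_single _ _ _ _ (pos w x)) => [|j].
  rewrite at_pos // mem_iota; have := pos_leq_size xw; rewrite /pos.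
  by case: (index x w) => [|k] /= hk; [rewrite ltn0 | rewrite (_ : k.+2 < _) //; lia].
by rewrite mem_iota => hj; apply: at_eq_pos => //; lia.
Qed.

Lemma gt_next_descent_top (x : nat) : x \in w -> pos w x < size w ->
  (at_ w (pos w x).+1 < x) = descent_top w x.
Proof. by move=> xw hx; rewrite descent_top_pos // hx. Qed.

Lemma lt_next_descent_top (x : nat) : 0 < x -> x \in w -> pos w x < size w ->
  (x < at_ w (pos w x).+1) = ~~ descent_top w x.
Proof.
move=> x_gt0 xw hx; rewrite descent_top_pos // hx -leqNgt ltn_neqAle eq_sym.
by rewrite at_neq // eqn_leq ltnn.
Qed.

Lemma lt_prev_descent_bottom (x : nat) : 0 < x -> x \in w ->
  (at_ w (pos w x).-1 < x) = ~~ descent_bottom w x.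
Proof.
move=> x_gt0 xw; rewrite descent_bottom_pos // -leqNgt ltn_neqAle at_neq //.
by rewrite /pos /= neq_ltn ltnSn.
Qed.

Lemma count_descent_bottom_at (P : pred nat) :
  count (fun y => descent_bottom w y && P y) w =
  count (fun j => (at_ w j.+1 < at_ w j) && P (at_ w j.+1)) (iota 1 (size w).-1).
Proof.
rewrite count_at; case E : (size w) => [|m] //.
have db1 : descent_bottom w (nth 0 w 0) = false.
  by rewrite -[nth 0 w 0]/(at_ w 1) descent_bottom_pos ?at_mem ?pos_at ?E.
rewrite -[iota 1 _]/(1 :: iota 2 m) -cat1s count_cat count_iota_succ.
rewrite [count _ [:: 1]]/= db1 add0n.
apply: eq_in_count => j; rewrite mem_iota => hj.
by rewrite descent_bottom_pos ?pos_at ?at_mem // E; lia.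
Qed.

Lemma count_descent_top_at (P : pred nat) :
  count (fun y => descent_top w y && P y) w =
  count (fun j => (at_ w j.+1 < at_ w j) && P (at_ w j)) (iota 1 (size w).-1).
Proof.
rewrite count_at; case E : (size w) => [|m] //.
have dtm : descent_top w (nth 0 w m) = false.
  by rewrite -[nth 0 w m]/(at_ w m.+1) descent_top_pos ?at_mem ?pos_at ?E ?ltnn ?leqnn.
rewrite -[m.+1.-1]/m -[m.+1]addn1 iotaD count_cat add1n.
rewrite [count _ (iota _ 1)]/= dtm !addn0.
apply: eq_in_count => j; rewrite mem_iota => hj.
by rewrite descent_top_pos ?pos_at ?at_mem ?E; try lia; rewrite (_ : j < m.+1) //; lia.
Qed.

Lemma count_descent_bottom : count (descent_bottom w) w = count (descent_top w) w.
Proof.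
rewrite (eq_count (a2 := fun y => descent_bottom w y && predT y)) => [|y]; last by rewrite andbT.
rewrite [RHS](eq_count (a2 := fun y => descent_top w y && predT y)) => [|y]; last by rewrite andbT.
by rewrite count_descent_bottom_at count_descent_top_at.
Qed.

Lemma count_descent_bottom_lt (x : nat) : x \in w ->
  count (fun y => descent_bottom w y && (y < x)) w =
  count (fun y => descent_top w y && (y < x)) w + descent_top w x + descents_across x.
Proof.
(* The top of a descent with bottom below x lies below x, at x, or above x. *)
move=> xw; rewrite -(count_and_pred1 (descent_top w) w_uniq xw).
rewrite count_descent_bottom_at !count_descent_top_at /descents_across.
apply: count_add3 => j /=.
by case: (ltngtP (at_ w j.+1) (at_ w j)); case: (ltngtP (at_ w j) x);
  case: (ltngtP (at_ w j.+1) x) => //=; lia.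
Qed.

Lemma pat2_31_pat2_13 (x : nat) : x \in w -> pos w x < size w -> at_ w (size w) < x ->
  pat2_31 w x = pat2_13 w x + (x < at_ w (pos w x).+1).
Proof.
move=> xw hx hlast.
have := crossings_telescope (x := x) (a := (pos w x).+1) (k := size w - (pos w x).+1).
rewrite subnKC // ltnNge (ltnW hlast) addn0 /pat2_31 /pat2_13 -predn_sub -subnS => -> //.
by move=> j hj; rewrite at_eq_pos //; lia.
Qed.

Lemma pat2_31_bound_descent_tops (x : nat) : x \in filter (descent_top w) w ->
  pat2_31 w x <= count (fun y => x < y) (filter (descent_top w) w).
Proof.
rewrite mem_filter count_filter => /andP [dtx xw].
have := count_descent_bottom_lt xw; have := pat2_31_leq_descents_across xw.
have := count_lt_gt (descent_top w) w_uniq xw; rewrite -count_descent_bottom dtx.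
have : count (fun y => descent_bottom w y && (y < x)) w <= count (descent_bottom w) w.
  by apply: sub_count => y /andP [].
rewrite (eq_count (a1 := predI _ _) (a2 := fun y => descent_top w y && (x < y))) => [|y];
  last exact: andbC.
lia.
Qed.

Lemma pat2_31_bound_non_descent_tops (x : nat) : x \in filter (fun y => ~~ descent_top w y) w ->
  pat2_31 w x <= count (fun y => y < x) (filter (fun y => ~~ descent_top w y) w).
Proof.
rewrite mem_filter count_filter => /andP [ndtx xw].
have := count_descent_bottom_lt xw; have := pat2_31_leq_descents_across xw.
have := count_split (descent_top w) (fun y => y < x) w; rewrite (negbTE ndtx).
have : count (fun y => descent_bottom w y && (y < x)) w <= count (fun y => y < x) w.
  by apply: sub_count => y /andP [].
rewrite (eq_count (a1 := predI _ _) (a2 := fun y => ~~ descent_top w y && (y < x))) => [|y];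
  last exact: andbC.
lia.
Qed.

End Word.

Lemma count_perm_filter (T : eqType) (a P : pred T) (l s : seq T) :
  perm_eq l (filter a s) -> count P l = count (fun y => a y && P y) s.
Proof. by move=> pl; rewrite (permP pl) count_filter; apply: eq_count => y; rewrite /= andbC. Qed.

Definition Phi_arrangement (w f' g' : seq nat) : Prop :=
  [/\ perm_eq f' (filter (descent_top w) w),
      perm_eq g' (filter (fun x => ~~ descent_top w x) w),
      forall k, k < size f' ->
        count (fun y => nth 0 f' k < y) (take k f') = pat2_31 w (nth 0 f' k)
    & forall k, k < size g' ->
        count (fun y => y < nth 0 g' k) (drop k.+1 g') = pat2_31 w (nth 0 g' k)].

Definition desc_bottoms (w : seq nat) := sort leq (filter (descent_bottom w) w).
Definition nondesc_bottoms (w : seq nat) :=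
  sort leq (filter (fun x => ~~ descent_bottom w x) w).

(* [phi w f' g' y] is the letter of Phi(w) at position y: the top entry of the
   column of the biword (f g / f' g') whose bottom entry is y. *)
Definition phi (w f' g' : seq nat) (y : nat) :=
  nth 0 (desc_bottoms w ++ nondesc_bottoms w) (index y (f' ++ g')).

Definition Phi_word (w f' g' : seq nat) := map (phi w f' g') (iota 1 (size w)).

Lemma Phi_specP (w t : seq nat) :
  Phi_spec w t <-> exists f' g', Phi_arrangement w f' g' /\ t = Phi_word w f' g'.
Proof.
by split=> [[f' [g' [pf pg cf cg ->]]]|[f' [g' [[pf pg cf cg] ->]]]]; exists f', g'.
Qed.

Lemma exists_Phi_arrangement (w : seq nat) : uniq w -> exists f' g', Phi_arrangement w f' g'.
Proof.
move=> w_uniq.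
have [f' pf cf] :=
  exists_larger_before_code (filter_uniq _ w_uniq) (pat2_31_bound_descent_tops w_uniq).
have [g' pg cg] :=
  exists_smaller_after_code (filter_uniq _ w_uniq) (pat2_31_bound_non_descent_tops w_uniq).
by exists f', g'; split.
Qed.

Definition descent_step (bottom top : bool) : step :=
  if bottom then (if top then Lr else U) else (if top then D else Lb).

Section PhiWord.
Variables w f' g' : seq nat.
Hypothesis w_uniq : uniq w.
Hypothesis fg_arr : Phi_arrangement w f' g'.
Local Notation ph := (phi w f' g').

Let f'_perm : perm_eq f' (filter (descent_top w) w). Proof. by case: fg_arr. Qed.
Let g'_perm : perm_eq g' (filter (fun x => ~~ descent_top w x) w). Proof. by case: fg_arr. Qed.
Let f'_uniq : uniq f'. Proof. by rewrite (perm_uniq f'_perm) filter_uniq. Qed.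
Let g'_uniq : uniq g'. Proof. by rewrite (perm_uniq g'_perm) filter_uniq. Qed.
Let f'_code k : k < size f' ->
  count (fun y => nth 0 f' k < y) (take k f') = pat2_31 w (nth 0 f' k).
Proof. by case: fg_arr => _ _ + _; apply. Qed.
Let g'_code k : k < size g' ->
  count (fun y => y < nth 0 g' k) (drop k.+1 g') = pat2_31 w (nth 0 g' k).
Proof. by case: fg_arr => _ _ _; apply. Qed.

Let fg_perm : perm_eq (f' ++ g') w.
Proof. exact: perm_trans (perm_cat f'_perm g'_perm) (permEl (perm_filterC _ _)). Qed.
Let bottoms_perm : perm_eq (desc_bottoms w ++ nondesc_bottoms w) w.
Proof.
apply: perm_trans (permEl (perm_filterC (descent_bottom w) _)).
by rewrite perm_cat ?perm_sort.
Qed.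

Let mem_f' y : (y \in f') = descent_top w y && (y \in w).
Proof. by rewrite (perm_mem f'_perm) mem_filter. Qed.
Let mem_g' y : (y \in g') = ~~ descent_top w y && (y \in w).
Proof. by rewrite (perm_mem g'_perm) mem_filter. Qed.
Let mem_db y : (y \in desc_bottoms w) = descent_bottom w y && (y \in w).
Proof. by rewrite mem_sort mem_filter. Qed.
Let mem_ndb y : (y \in nondesc_bottoms w) = ~~ descent_bottom w y && (y \in w).
Proof. by rewrite mem_sort mem_filter. Qed.

Let db_leq_sorted : sorted leq (desc_bottoms w).
Proof. by apply: sort_sorted; exact: leq_total. Qed.
Let ndb_leq_sorted : sorted leq (nondesc_bottoms w).
Proof. by apply: sort_sorted; exact: leq_total. Qed.
Let db_ltn_sorted : sorted ltn (desc_bottoms w).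
Proof. by rewrite ltn_sorted_uniq_leq sort_uniq filter_uniq. Qed.
Let ndb_ltn_sorted : sorted ltn (nondesc_bottoms w).
Proof. by rewrite ltn_sorted_uniq_leq sort_uniq filter_uniq. Qed.

Let count_db P : count P (desc_bottoms w) = count (fun y => descent_bottom w y && P y) w.
Proof. exact/count_perm_filter/permEl/perm_sort. Qed.
Let count_ndb P :
  count P (nondesc_bottoms w) = count (fun y => ~~ descent_bottom w y && P y) w.
Proof. exact/count_perm_filter/permEl/perm_sort. Qed.

Lemma size_desc_bottoms : size (desc_bottoms w) = size f'.
Proof. by rewrite size_sort (perm_size f'_perm) !size_filter count_descent_bottom. Qed.

Lemma size_nondesc_bottoms : size (nondesc_bottoms w) = size g'.
Proof.
rewrite size_sort (perm_size g'_perm) !size_filter.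
have count_neg a : count (fun x => ~~ a x) w = size w - count a w.
  by rewrite -(count_predC a w) addKn.
by rewrite !count_neg count_descent_bottom.
Qed.

Lemma phi_mem_f' (y : nat) : y \in f' -> ph y = nth 0 (desc_bottoms w) (index y f').
Proof. by move=> yf; rewrite /phi index_cat yf nth_cat size_desc_bottoms index_mem yf. Qed.

Lemma phi_mem_g' (y : nat) : y \in g' ->
  ph y = nth 0 (nondesc_bottoms w) (index y g').
Proof.
move=> yg; have : y \notin f' by move: yg; rewrite mem_g' mem_f' => /andP [/negbTE ->].
rewrite /phi index_cat => /negbTE ->.
by rewrite nth_cat size_desc_bottoms ltnNge leq_addr /= addKn.
Qed.

Lemma phi_descent_top (y : nat) : y \in w -> descent_top w y ->
  ph y < y /\ descent_bottom w (ph y).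
Proof.
move=> yw dty; have yf : y \in f' by rewrite mem_f' dty.
set k := index y f'; have hk : k < size f' by rewrite index_mem.
rewrite phi_mem_f' //; split; last first.
  have : nth 0 (desc_bottoms w) k \in desc_bottoms w.
    by apply: mem_nth; rewrite size_desc_bottoms.
  by rewrite mem_db => /andP [].
rewrite sorted_nth_lt_count ?size_desc_bottoms // count_db count_descent_bottom_lt // dty.
(* k is (2-31)_y plus the number of letters of f' below y that precede y, which is
   less than the number of descent bottoms below y. *)
have yk : y \notin take k f' by rewrite in_take // ltnn.
have k_split : k = count (fun z => z < y) (take k f') + count (fun z => y < z) (take k f')
                 + count (pred1 y) (take k f').
  rewrite -[LHS](size_takel (ltnW hk)) -count_predT.
  by apply: count_add3 => z /=; case: ltngtP.
have := f'_code hk; rewrite (nth_index 0 yf) => code_y.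
rewrite count_uniq_mem ?take_uniq // (negbTE yk) addn0 code_y in k_split.
have hB : count (fun z => z < y) (take k f') <= count (fun z => descent_top w z && (z < y)) w.
  by rewrite -(count_perm_filter _ f'_perm) -{2}(cat_take_drop k f') count_cat leq_addr.
have hP := pat2_31_leq_descents_across yw.
by rewrite -/k k_split addn1 addSn ltnS leq_add.
Qed.

Lemma phi_non_descent_top (y : nat) : y \in w -> ~~ descent_top w y ->
  y <= ph y /\ ~~ descent_bottom w (ph y).
Proof.
move=> yw ndty; have yg : y \in g' by rewrite mem_g' ndty.
set k := index y g'; have hk : k < size g' by rewrite index_mem.
rewrite phi_mem_g' //; split; last first.
  have : nth 0 (nondesc_bottoms w) k \in nondesc_bottoms w.
    by apply: mem_nth; rewrite size_nondesc_bottoms.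
  by rewrite mem_ndb => /andP [].
(* The non-descent bottoms below y are the non-descent tops below y minus the
   descents across y, hence at most k of them. *)
rewrite leqNgt sorted_nth_lt_count ?size_nondesc_bottoms // count_ndb -leqNgt.
have := count_descent_bottom_lt w_uniq yw; rewrite (negbTE ndty) addn0.
have := count_split (descent_bottom w) (fun z => z < y) w.
have := count_split (descent_top w) (fun z => z < y) w.
have : count (fun z => ~~ descent_top w z && (z < y)) w <= k + pat2_31 w y.
  have := g'_code hk; rewrite (nth_index 0 yg) => <-.
  rewrite -(count_perm_filter _ g'_perm) -{1}(cat_take_drop k g') (drop_nth 0 hk).
  rewrite (nth_index 0 yg) count_cat /= ltnn add0n leq_add2r.
  by rewrite -[leqRHS](size_takel (ltnW hk)) count_size.
have := pat2_31_leq_descents_across yw.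
move=> hP hN e_dt e_db e_bot; clear -hP hN e_dt e_db e_bot; lia.
Qed.
Lemma leq_phi (x : nat) : x \in w -> (x <= ph x) = ~~ descent_top w x.
Proof.
move=> xw; case: (boolP (descent_top w x)) => dtx.
  by have [+ _] := phi_descent_top xw dtx; rewrite ltnNge => /negbTE.
by have [-> _] := phi_non_descent_top xw dtx.
Qed.

Lemma pat2_31_phi_descent_top (x : nat) : x \in w -> descent_top w x ->
  pat2_31 w x = count (fun y => (x < y) && (ph y < ph x)) w.
Proof.
move=> xw dtx; rewrite (count_split (descent_top w)).
rewrite [X in _ + X](eq_in_count (a2 := pred0)) ?count_pred0 ?addn0 => [|y yw]; last first.
  apply/negbTE/and3P => -[ndty xy]; rewrite ltnNge.
  have [phx _] := phi_descent_top xw dtx; have [phy _] := phi_non_descent_top yw ndty.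
  by rewrite (leq_trans (ltnW (ltn_trans phx xy)) phy).
have xf : x \in f' by rewrite mem_f' dtx.
have hx : index x f' < size f' by rewrite index_mem.
have := f'_code hx; rewrite nth_index // -count_index_ltn // => <-.
rewrite -(count_perm_filter _ f'_perm); apply: eq_in_count => y yf; congr (_ && _).
by rewrite !phi_mem_f' // (sorted_nth_ltn db_ltn_sorted) ?inE ?size_desc_bottoms ?index_mem.
Qed.

Lemma pat2_31_phi_non_descent_top (x : nat) : x \in w -> ~~ descent_top w x ->
  pat2_31 w x = count (fun y => (y < x) && (ph x < ph y)) w.
Proof.
move=> xw ndtx; rewrite (count_split (descent_top w)).
rewrite [X in X + _](eq_in_count (a2 := pred0)) ?count_pred0 ?add0n => [|y yw]; last first.
  apply/negbTE/and3P => -[dty yx]; rewrite ltnNge.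
  have [phy _] := phi_descent_top yw dty; have [phx _] := phi_non_descent_top xw ndtx.
  by rewrite (leq_trans (ltnW (ltn_trans phy yx)) phx).
have xg : x \in g' by rewrite mem_g' ndtx.
have hx : index x g' < size g' by rewrite index_mem.
have := g'_code hx; rewrite nth_index // -count_index_gtn // => <-.
rewrite -(count_perm_filter _ g'_perm); apply: eq_in_count => y yg; congr (_ && _).
by rewrite !phi_mem_g' // (sorted_nth_ltn ndb_ltn_sorted) ?inE ?size_nondesc_bottoms ?index_mem.
Qed.

Hypothesis w_perm : is_perm (size w) w.
Hypothesis w_last : at_ w (size w) = 1.
Hypothesis w_size : 1 < size w.

Let size_w_bounds : 0 < size w <= size w. Proof. by rewrite leqnn andbT ltnW. Qed.
Let one_w : 1 \in w. Proof. by rewrite -w_last at_mem. Qed.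
Let pos_one : pos w 1 = size w. Proof. by rewrite -{1}w_last pos_at. Qed.
Let ndt_one : ~~ descent_top w 1. Proof. by rewrite descent_top_pos // pos_one ltnn. Qed.

Lemma pat2_31_gt0 (z : nat) : z \in w -> ~~ descent_top w z -> z != 1 -> 0 < pat2_31 w z.
Proof.
move=> zw ndtz z1; have z_gt0 : 0 < z by move: zw; rewrite (mem_is_perm _ w_perm) => /andP [].
have hz : pos w z < size w.
  rewrite ltn_neqAle pos_leq_size // andbT; apply: contra z1 => /eqP hz.
  by rewrite -(at_pos zw) hz w_last.
rewrite (pat2_31_pat2_13 w_uniq zw hz); last by rewrite w_last ltn_neqAle eq_sym z1.
by rewrite lt_next_descent_top // ndtz addn1.
Qed.

Lemma last_g' : nth 0 g' (size g').-1 = 1.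
Proof.
have og : 1 \in g' by rewrite mem_g' ndt_one.
have sg : 0 < size g' by case: (g') og.
have hlast : (size g').-1 < size g' by rewrite prednK.
have := g'_code hlast; rewrite prednK // drop_size /=.
move=> hp; apply/eqP; apply: contraT => z1.
have /(mem_nth 0) := hlast; rewrite mem_g' => /andP [ndtz zw].
by have := pat2_31_gt0 zw ndtz z1; rewrite -hp.
Qed.

Lemma last_nondesc_bottoms :
  nth 0 (nondesc_bottoms w) (size (nondesc_bottoms w)).-1 = size w.
Proof.
have mw : size w \in w by rewrite (mem_is_perm _ w_perm) leqnn andbT ltnW.
have m_ndb : size w \in nondesc_bottoms w.
  by rewrite mem_ndb mw andbT descent_bottom_pos // -leqNgt at_leq_size.
have sz : 0 < size (nondesc_bottoms w) by case: (nondesc_bottoms w) m_ndb.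
have hlast : (size (nondesc_bottoms w)).-1 < size (nondesc_bottoms w) by rewrite prednK.
apply/eqP; rewrite eqn_leq; apply/andP; split.
  have /(mem_nth 0) := hlast; rewrite mem_ndb (mem_is_perm _ w_perm).
  by case/andP => _ /andP [].
rewrite -{1}(nth_index 0 m_ndb).
apply: (sorted_leq_nth leq_trans leqnn 0 ndb_leq_sorted); rewrite ?inE ?index_mem //.
by rewrite -ltnS prednK // index_mem.
Qed.

Lemma phi_one : ph 1 = size w.
Proof.
have og : 1 \in g' by rewrite mem_g' ndt_one.
have sg : 0 < size g' by case: (g') og.
rewrite phi_mem_g' // -{1}last_g' index_uniq ?prednK //.
by rewrite -size_nondesc_bottoms last_nondesc_bottoms.
Qed.

Lemma phi_lt_size (y : nat) : y \in w -> y != 1 -> ph y < size w.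
Proof.
move=> yw y1; case: (boolP (descent_top w y)) => dty.
  have [+ _] := phi_descent_top yw dty; move/leq_trans; apply.
  by move: yw; rewrite (mem_is_perm _ w_perm) => /andP [].
have yg : y \in g' by rewrite mem_g' dty.
have sg : 0 < size g' by case: (g') yg.
have hk : index y g' < (size g').-1.
  rewrite ltn_neqAle -ltnS prednK // index_mem yg andbT.
  by apply: contra y1 => /eqP hy; rewrite -last_g' -hy nth_index.
have hlast : (size g').-1 < size g' by rewrite prednK.
rewrite phi_mem_g' // -last_nondesc_bottoms (sorted_nth_ltn ndb_ltn_sorted);
  by rewrite ?inE size_nondesc_bottoms // (ltn_trans hk).
Qed.

Lemma size_Phi_word : size (Phi_word w f' g') = size w.
Proof. by rewrite size_map size_iota. Qed.

Lemma at_Phi_word j : 0 < j <= size w -> at_ (Phi_word w f' g') j = ph j.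
Proof. by case: j => // j /= hj; rewrite (nth_map 0) ?size_iota // nth_iota // add1n. Qed.

Lemma head_Phi_word : head 0 (Phi_word w f' g') = size w.
Proof. by rewrite /Phi_word -[RHS]phi_one; case: (size w) w_size. Qed.

Lemma Phi_word_cons : Phi_word w f' g' = size w :: behead (Phi_word w f' g').
Proof.
case: (Phi_word w f' g') size_Phi_word head_Phi_word => [|a t] /= szT; last by move->.
by move: w_size; rewrite -szT.
Qed.

Lemma at_behead_Phi_word j : 0 < j < size w ->
  at_ (behead (Phi_word w f' g')) j = ph j.+1.
Proof. by case: j => // j /= hj; rewrite nth_behead -at_Phi_word. Qed.

Lemma pos_behead_Phi_word (x : nat) : x != size w ->
  pos (Phi_word w f' g') x = (pos (behead (Phi_word w f' g')) x).+1.
Proof. by move=> xm; rewrite /pos {1}Phi_word_cons /= eq_sym (negbTE xm). Qed.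

Lemma mem_Phi_word (x : nat) : x \in w -> x \in Phi_word w f' g'.
Proof.
move=> xw; have xb : x \in desc_bottoms w ++ nondesc_bottoms w by rewrite (perm_mem bottoms_perm).
have hk : index x (desc_bottoms w ++ nondesc_bottoms w) < size (f' ++ g').
  by rewrite (perm_size fg_perm) -(perm_size bottoms_perm) index_mem.
apply/mapP; exists (nth 0 (f' ++ g') (index x (desc_bottoms w ++ nondesc_bottoms w))).
  by rewrite -(perm_mem w_perm) -(perm_mem fg_perm) mem_nth.
by rewrite /phi index_uniq ?(perm_uniq fg_perm) // nth_index.
Qed.

Lemma lt_pos_Phi_word (x : nat) : x \in w -> (x < pos (Phi_word w f' g') x) = descent_bottom w x.
Proof.
move=> xw; have xT := mem_Phi_word xw.
set y := pos _ x; have hy : 0 < y <= size w by rewrite /y /pos -size_Phi_word index_mem.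
have yw : y \in w by rewrite (mem_is_perm _ w_perm).
have <- : ph y = x by rewrite -at_Phi_word // at_pos.
case: (boolP (descent_top w y)) => dty; first by have [-> ->] := phi_descent_top yw dty.
by have [+ /negbTE ->] := phi_non_descent_top yw dty; rewrite ltnNge => ->.
Qed.

Lemma yzl_step_behead_Phi_word i : 0 < i -> i.+1 < size w ->
  yzl_step (behead (Phi_word w f' g')) i =
  descent_step (descent_bottom w i.+1) (descent_top w i.+1).
Proof.
move=> i_gt0 hi; have xw : i.+1 \in w by rewrite (mem_is_perm _ w_perm) (ltnW hi).
rewrite /yzl_step at_behead_Phi_word ?i_gt0 ?(ltnW hi) // leq_phi //.
rewrite -[i.+1 <= _]ltnS -pos_behead_Phi_word ?neq_ltn ?hi // lt_pos_Phi_word //.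
by case: (descent_bottom w i.+1); case: (descent_top w i.+1).
Qed.

Lemma nest_behead_Phi_word i : 0 < i -> i.+1 < size w ->
  nest (behead (Phi_word w f' g')) i = pat2_13 w i.+1.
Proof.
move=> i_gt0 hi; set x := i.+1.
have xw : x \in w by rewrite (mem_is_perm _ w_perm) (ltnW hi).
pose Q y := ((y < x) && (x <= ph x) && (ph x < ph y)) || ((ph y < ph x) && (ph x < x) && (x < y)).
have e_nest : nest (behead (Phi_word w f' g')) i = count (fun j => Q j.+1) (iota 1 (size w).-1).
  rewrite /nest size_behead size_Phi_word; apply: eq_in_count => j.
  rewrite mem_iota add1n prednK ?(ltnW w_size) // => hj.
  by rewrite !at_behead_Phi_word ?i_gt0 ?(ltnW hi).
have e_count : count Q w = Q 1 + count (fun j => Q j.+1) (iota 1 (size w).-1).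
  by rewrite (permP w_perm) -{1}(prednK (ltnW w_size)) -count_iota_succ.
have e_Q : count Q w = pat2_31 w x.
  case: (boolP (descent_top w x)) => dtx.
    rewrite (pat2_31_phi_descent_top xw dtx); apply: eq_count => y.
    have [phx _] := phi_descent_top xw dtx.
    by rewrite /Q [x <= _]leqNgt phx andbF /= andbT andbC.
  rewrite (pat2_31_phi_non_descent_top xw dtx); apply: eq_count => y.
  have [phx _] := phi_non_descent_top xw dtx.
  by rewrite /Q phx [ph x < x]ltnNge phx andbT /= andbF orbF.
have x_gt1 : 1 < x := i_gt0.
have e_Q1 : Q 1 = ~~ descent_top w x.
  have x1 : x != 1 by rewrite gtn_eqF.
  by rewrite /Q x_gt1 /= andbF orbF phi_one (phi_lt_size xw x1) andbT leq_phi.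
have e_pat : pat2_31 w x = pat2_13 w x + ~~ descent_top w x.
  have hx : pos w x < size w.
    rewrite ltn_neqAle pos_leq_size // andbT; apply: contraTneq x_gt1 => hx.
    by rewrite -(at_pos xw) hx w_last.
  by rewrite -lt_next_descent_top // pat2_31_pat2_13 // w_last.
by apply/eqP; rewrite -(eqn_add2r (~~ descent_top w x)) -e_pat -e_Q e_count e_Q1 addnC e_nest.
Qed.

End PhiWord.

Section Hat.
Variables (n : nat) (s : seq nat).
Hypothesis s_perm : is_perm n s.

Let size_s : size s = n. Proof. by rewrite (perm_size s_perm) size_iota. Qed.

Lemma size_hat : size (hat s) = n.+1.
Proof. by rewrite size_rcons size_map size_s. Qed.

Lemma is_perm_hat : is_perm n.+1 (hat s).
Proof.
rewrite /is_perm /hat perm_rcons -[iota 1 n.+1]/(1 :: iota 2 n) perm_cons.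
have -> : iota 2 n = map succn (iota 1 n) by rewrite (iotaDl 1 1); apply: eq_map.
exact: perm_map.
Qed.

Lemma at_hat_last : at_ (hat s) n.+1 = 1.
Proof. by rewrite /= nth_rcons size_map size_s ltnn eqxx. Qed.

Lemma at_hat k : 0 < k <= n -> at_ (hat s) k = (at_ s k).+1.
Proof.
case: k => // k /= hk; rewrite nth_rcons size_map size_s hk.
by rewrite (nth_map 0) // size_s.
Qed.

Lemma at_hat_out k : n.+1 < k -> at_ (hat s) k = 0.
Proof. by move=> hk; rewrite at_out // size_hat; lia. Qed.

Lemma ltn_at_hat (i k : nat) : 0 < i ->
  ((i < at_ s k) = (i.+1 < at_ (hat s) k)) /\ ((at_ s k < i) = (at_ (hat s) k < i.+1)).
Proof.
move=> i_gt0; case: (ltngtP k n.+1) => hk.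
- case: k hk => [|k] hk; first by rewrite /= ltn0 i_gt0.
  by rewrite at_hat ?ltnS.
- by rewrite at_hat_out // at_out ?size_s ?ltn0 ?i_gt0 //; lia.
by rewrite hk at_hat_last at_out ?size_s ?ltn0 //; lia.
Qed.

Lemma pos_hat (i : nat) : i \in s -> pos (hat s) i.+1 = pos s i.
Proof.
move=> i_s; rewrite /pos /hat -cats1 index_cat (map_f succn i_s).
by rewrite index_map //; apply: succn_inj.
Qed.

Lemma fv_step_hat (i : nat) : i \in s ->
  fv_step s i = descent_step (descent_bottom (hat s) i.+1) (descent_top (hat s) i.+1).
Proof.
move=> i_s; have w_uniq := is_perm_uniq is_perm_hat.
have /andP [i_gt0 i_le] : 0 < i <= n by rewrite -(mem_is_perm _ s_perm).
have xw : i.+1 \in hat s by rewrite (mem_is_perm _ is_perm_hat).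
have hx : pos (hat s) i.+1 < size (hat s) by rewrite pos_hat // size_hat ltnS -size_s pos_leq_size.
rewrite /fv_step; cbv zeta.
have [-> ->] := ltn_at_hat (pos s i).-1 i_gt0.
have [-> ->] := ltn_at_hat (pos s i).+1 i_gt0; rewrite -pos_hat //.
rewrite -descent_bottom_pos // lt_prev_descent_bottom // lt_next_descent_top //.
rewrite gt_next_descent_top //.
by case: (descent_bottom (hat s) i.+1); case: (descent_top (hat s) i.+1).
Qed.

Lemma pat2_13_hat (i : nat) : i \in s -> pat2_13 s i = pat2_13 (hat s) i.+1.
Proof.
move=> i_s; have /andP [i_gt0 _] : 0 < i <= n by rewrite -(mem_is_perm _ s_perm).
rewrite /pat2_13 pos_hat // size_hat size_s -[n.+1.-1]/n.
have [hp|hp] := ltnP (pos s i) n; last first.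
  have [e1 e2] : n - pos s i = 0 /\ n.-1 - pos s i = 0 by clear -hp; lia.
  by rewrite e1 e2.
have [e1 e2] : n - pos s i = n.-1 - pos s i + 1 /\ (pos s i).+1 + (n.-1 - pos s i) = n.
  by clear -hp; lia.
rewrite e1 iotaD count_cat count_iota1 e2 at_hat_last [i.+1 < 1]ltnS ltn0 andbF addn0.
apply: eq_count => j.
by have [_ ->] := ltn_at_hat j i_gt0; have [-> _] := ltn_at_hat j.+1 i_gt0.
Qed.

End Hat.

Section HatPhiWord.
Variables (n : nat) (s f' g' : seq nat).
Hypothesis s_perm : is_perm n.+1 s.
Hypothesis fg_arr : Phi_arrangement (hat s) f' g'.

Let w_size : size (hat s) = n.+2. Proof. exact: size_hat. Qed.
Let w_perm : is_perm (size (hat s)) (hat s). Proof. by rewrite w_size; apply: is_perm_hat. Qed.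
Let w_uniq : uniq (hat s). Proof. exact: is_perm_uniq w_perm. Qed.
Let w_last : at_ (hat s) (size (hat s)) = 1. Proof. by rewrite w_size at_hat_last. Qed.
Let w_gt1 : 1 < size (hat s). Proof. by rewrite w_size. Qed.

Lemma head_Phi_word_hat : head 0 (Phi_word (hat s) f' g') = n.+2.
Proof. by rewrite (head_Phi_word w_uniq fg_arr w_perm w_last w_gt1). Qed.

Lemma psi_FV_Phi_word_hat : psi_FV s = psi_YZL (Psi_of (Phi_word (hat s) f' g')).
Proof.
rewrite /psi_FV /psi_YZL /Psi_of size_behead size_Phi_word w_size (perm_size s_perm) size_iota.
congr pair; apply/eq_in_map => i; rewrite mem_iota /= add1n => /andP [i_gt0 hi].
- have i_s : i \in s by rewrite (mem_is_perm _ s_perm) i_gt0 ltnW.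
  rewrite (fv_step_hat s_perm i_s) (yzl_step_behead_Phi_word w_uniq fg_arr w_perm) //.
  by rewrite w_size.
have i_s : i \in s by rewrite (mem_is_perm _ s_perm) i_gt0 ltnW.
rewrite (pat2_13_hat s_perm i_s) (nest_behead_Phi_word w_uniq fg_arr w_perm) //.
by rewrite w_size.
Qed.

End HatPhiWord.

Theorem theorem2p7 (n : nat) (s : seq nat) :
  is_perm n.+1 s ->
  (exists t, Phi_spec (hat s) t) /\
  (forall t, Phi_spec (hat s) t ->
     head 0 t = n.+2 /\ psi_FV s = psi_YZL (Psi_of t)).
Proof.
move=> s_perm; split.
  have [f' [g' fg_arr]] := exists_Phi_arrangement (is_perm_uniq (is_perm_hat s_perm)).
  by exists (Phi_word (hat s) f' g'); apply/Phi_specP; exists f', g'.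
move=> t /Phi_specP [f' [g' [fg_arr ->]]].
split; [exact: head_Phi_word_hat s_perm fg_arr | exact: psi_FV_Phi_word_hat s_perm fg_arr].
Qed.
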